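(* Let $R$ and $S$ be commutative rings with identity, $f:R\to S$ a surjective ring homomorphism, and $J$ a nonzero proper ideal of $S$. Then $R\bowtie^f J$ is a properly zipped ring if and only if $R$ is a properly zipped ring.
   Context: $R\bowtie^f J:=\{(r,f(r)+j)\mid r\in R,\ j\in J\}$, a subring of $R\times S$. A commutative ring $A$ is properly zipped if whenever a prime ideal $\mathfrak{p}$ of $A$ contains the intersection of a family $\{\mathfrak{p}_i\}_i$ of prime ideals of $A$, then $\mathfrak{p}_i\subseteq\mathfrak{p}$ for some $i$. *)

From HB Require Import structures.
From mathcomp Require Import all_boot all_algebra.
Set Implicit Arguments. Unset Strict Implicit. Unset Printing Implicit Defensive.
Import GRing.Theory.
Local Open Scope ring_scope.

(* Subsets of a carrier are represented as predicates T -> Prop.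
   A is a subring of the commutative ring T (e.g. T itself, or R ⋈^f J
   inside R × S); ideals / prime ideals are those of the ring A. *)

Definition is_ideal_in (T : comNzRingType) (A P : T -> Prop) : Prop :=
  (forall x, P x -> A x) /\ P 0 /\
  (forall x y, P x -> P y -> P (x + y)) /\
  (forall a x, A a -> P x -> P (a * x)).

Definition is_prime_ideal_in (T : comNzRingType) (A P : T -> Prop) : Prop :=
  is_ideal_in A P /\ ~ P 1 /\
  (forall a b, A a -> A b -> P (a * b) -> P a \/ P b).

Definition properly_zipped_in (T : comNzRingType) (A : T -> Prop) : Prop :=
  forall (I : Type) (p : T -> Prop) (q : I -> T -> Prop),
    is_prime_ideal_in A p ->
    (forall i, is_prime_ideal_in A (q i)) ->
    (forall x, A x -> (forall i, q i x) -> p x) ->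
    exists i, forall x, q i x -> p x.

Definition properly_zipped (T : comNzRingType) : Prop :=
  properly_zipped_in (fun _ : T => True).

Definition is_ideal (S : comNzRingType) (J : S -> Prop) : Prop :=
  is_ideal_in (fun _ : S => True) J.

Definition amalgamation (R S : comNzRingType) (f : {rmorphism R -> S})
  (J : S -> Prop) : R * S -> Prop :=
  fun x => exists r j, J j /\ x = (r, f r + j).

From HB Require Import structures.
From mathcomp Require Import all_boot all_algebra.
From Stdlib Require Import Classical.
Set Implicit Arguments. Unset Strict Implicit. Unset Printing Implicit Defensive.
Import GRing.Theory.
Local Open Scope ring_scope.

(* The projections of R ⋈^f J onto R and (f being onto) onto S are surjective,
   with kernels 0 × J and {(r, 0) | f r ∈ J} whose product is zero; hence every
   prime of R ⋈^f J lies above one of the two kernels.  Being properly zipped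
   passes to surjective images (pull the primes back), which gives one direction
   and shows that S is properly zipped too.  Conversely, primes above a kernel
   correspond to primes of the image, so the zipping property holds for families
   of primes above either kernel.  If a prime p contains the intersection of a
   family q_i, split the family into the q_i above the first kernel and the
   rest, which lie above the second: the product of the two sub-intersections
   lies in every q_i, so p contains one of them and the relative property
   applies to that subfamily. *)

Definition subring_in (T : comNzRingType) (A : T -> Prop) : Prop :=
  [/\ A 1, forall x y, A x -> A y -> A (x - y) & forall x y, A x -> A y -> A (x * y)].

Definition kernel_in (T U : comNzRingType) (A : T -> Prop) (g : T -> U) : T -> Prop :=
  fun x => A x /\ g x = 0.

Definition preimage_in (T U : comNzRingType) (A : T -> Prop) (g : T -> U)
  (P : U -> Prop) : T -> Prop :=
  fun x => A x /\ P (g x).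

Definition image_of (T U : comNzRingType) (g : T -> U) (P : T -> Prop) : U -> Prop :=
  fun y => exists2 x, P x & g x = y.

Definition properly_zipped_above (T : comNzRingType) (A K : T -> Prop) : Prop :=
  forall (I : Type) (p : T -> Prop) (q : I -> T -> Prop),
    is_prime_ideal_in A p -> (forall i, is_prime_ideal_in A (q i)) ->
    (forall x, K x -> p x) -> (forall i x, K x -> q i x) ->
    (forall x, A x -> (forall i, q i x) -> p x) ->
    exists i, forall x, q i x -> p x.

Section SubringIn.

Variables (T : comNzRingType) (A : T -> Prop).
Hypothesis subA : subring_in A.

Lemma subring_in1 : A 1.
Proof. by case: subA. Qed.

Lemma subring_inB x y : A x -> A y -> A (x - y).
Proof. by case: subA => _ AB _; apply: AB. Qed.

Lemma subring_inM x y : A x -> A y -> A (x * y).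
Proof. by case: subA => _ _ AM; apply: AM. Qed.

Lemma subring_in0 : A 0.
Proof. by rewrite -(subrr 1); apply: subring_inB; apply: subring_in1. Qed.

Lemma subring_inN x : A x -> A (- x).
Proof. by move=> Ax; rewrite -sub0r; apply: subring_inB => //; apply: subring_in0. Qed.

Lemma subring_inD x y : A x -> A y -> A (x + y).
Proof.
by move=> Ax Ay; rewrite -[y]opprK; apply: subring_inB => //; apply: subring_inN.
Qed.

End SubringIn.

Lemma subring_inT (T : comNzRingType) : subring_in (fun _ : T => True).
Proof. by []. Qed.

Section SurjectiveImage.

Variables (T U : comNzRingType) (g : {rmorphism T -> U}).
Variables (A : T -> Prop) (B : U -> Prop).
Hypothesis subA : subring_in A.
Hypothesis gAB : forall x, A x -> B (g x).
Hypothesis g_onto : forall y, B y -> exists2 x, A x & g x = y.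

Lemma prime_preimage_in P :
  is_prime_ideal_in B P -> is_prime_ideal_in A (preimage_in A g P).
Proof.
move=> [[_ [P0 [PD PM]]] [P1 Pprime]].
split; [split; [|split; [|split]]|split].
- by move=> x [].
- by split; [apply: subring_in0|rewrite rmorph0].
- move=> x y [Ax Px] [Ay Py].
  by split; [apply: subring_inD|rewrite rmorphD; apply: PD].
- move=> a x Aa [Ax Px].
  by split; [apply: subring_inM|rewrite rmorphM; apply: PM => //; apply: gAB].
- by rewrite /preimage_in rmorph1 => -[].
- move=> a b Aa Ab [_]; rewrite rmorphM => /Pprime.
  by case=> [||Pa|Pb]; [apply: gAB..|left|right].
Qed.

Lemma ideal_above_kernel_saturated P x y :
  is_ideal_in A P -> (forall z, kernel_in A g z -> P z) ->
  A x -> P y -> g x = g y -> P x.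
Proof.
move=> [PA [_ [PD _]]] kerP Ax Py gxy.
rewrite -(subrK y x); apply: PD => //; apply: kerP.
by split; [apply: subring_inB => //; apply: PA|rewrite rmorphB gxy subrr].
Qed.

Lemma prime_image_of P :
  is_prime_ideal_in A P -> (forall z, kernel_in A g z -> P z) ->
  is_prime_ideal_in B (image_of g P).
Proof.
move=> Pprime kerP; have saturated := ideal_above_kernel_saturated Pprime.1 kerP.
move: Pprime => [[PA [P0 [PD PM]]] [P1 Pprime]].
split; [split; [|split; [|split]]|split].
- by move=> _ [x Px <-]; apply/gAB/PA.
- by exists 0; rewrite ?rmorph0.
- by move=> _ _ [x Px <-] [y Py <-]; exists (x + y); rewrite ?rmorphD //; apply: PD.
- move=> _ _ /g_onto[a Aa <-] [x Px <-].
  by exists (a * x); rewrite ?rmorphM //; apply: PM.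
- move=> [x Px gx]; apply/P1/(saturated 1 x) => //; last by rewrite rmorph1.
  exact: subring_in1.
- move=> _ _ /g_onto[a Aa <-] /g_onto[b Bb <-] [x Px gx].
  have Pab : P (a * b) by apply: (saturated _ x); rewrite ?rmorphM //; apply: subring_inM.
  by case: (Pprime a b Aa Bb Pab) => [Pa|Pb]; [left; exists a|right; exists b].
Qed.

Lemma properly_zipped_in_image :
  properly_zipped_in A -> properly_zipped_in B.
Proof.
move=> zippedA I p q pprime qprime meet_le_p.
have [i le_qi_p] := zippedA I (preimage_in A g p) (fun i => preimage_in A g (q i))
  (prime_preimage_in pprime) (fun i => prime_preimage_in (qprime i))
  (fun x Ax qx => conj Ax (meet_le_p _ (gAB Ax) (fun i => (qx i).2))).
exists i => _ /[dup] /(qprime i).1.1 /g_onto[x Ax <-] qgx.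
exact: (le_qi_p x (conj Ax qgx)).2.
Qed.

Lemma properly_zipped_above_kernel :
  properly_zipped_in B -> properly_zipped_above A (kernel_in A g).
Proof.
move=> zippedB I p q pprime qprime ker_p ker_q meet_le_p.
have meet_image_le : forall y, B y ->
    (forall i, image_of g (q i) y) -> image_of g p y.
  move=> _ /g_onto[x Ax <-] qgx; exists x => //; apply: meet_le_p => // i.
  have [x' qx' gx'] := qgx i.
  exact: (ideal_above_kernel_saturated (qprime i).1 (ker_q i) Ax qx').
have [i le_qi_p] := zippedB I (image_of g p) (fun i => image_of g (q i))
  (prime_image_of pprime ker_p) (fun i => prime_image_of (qprime i) (ker_q i))
  meet_image_le.
exists i => x qx; have [x' px' gx'] := le_qi_p (g x) (ex_intro2 _ _ x qx erefl).
exact: (ideal_above_kernel_saturated pprime.1 ker_p ((qprime i).1.1 x qx) px').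
Qed.

End SurjectiveImage.

Section ZippedAboveTwoKernels.

Variables (T : comNzRingType) (A : T -> Prop).
Hypothesis subA : subring_in A.

Lemma prime_above_meet_split (I : Type) (p : T -> Prop) (q : I -> T -> Prop)
    (D : I -> Prop) :
  is_prime_ideal_in A p -> (forall i, is_ideal_in A (q i)) ->
  (forall x, A x -> (forall i, q i x) -> p x) ->
  (forall x, A x -> (forall i, D i -> q i x) -> p x) \/
  (forall x, A x -> (forall i, ~ D i -> q i x) -> p x).
Proof.
move=> [_ [_ pprime]] qideal meet_le_p.
have [[x [Ax qx] npx]|noD] :=
  classic (exists2 x, A x /\ (forall i, D i -> q i x) & ~ p x); last first.
  by left => x Ax qx; apply: NNPP => npx; apply: noD; exists x.
right => y Ay qy.
have pxy : p (x * y).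
  apply: meet_le_p => [|i]; first exact: subring_inM.
  have [_ [_ [_ qM]]] := qideal i.
  by have [Di|nDi] := classic (D i); [rewrite mulrC|]; apply: qM; auto.
by case: (pprime x y Ax Ay pxy).
Qed.

Lemma prime_above_either_kernel (K1 K2 P : T -> Prop) :
  (forall x, K1 x -> A x) -> (forall x, K2 x -> A x) ->
  (forall x y, K1 x -> K2 y -> x * y = 0) -> is_prime_ideal_in A P ->
  (forall x, K1 x -> P x) \/ (forall x, K2 x -> P x).
Proof.
move=> K1A K2A K12 [[_ [P0 _]] [_ Pprime]].
have [[x K1x nPx]|K1P] := classic (exists2 x, K1 x & ~ P x); last first.
  by left => x K1x; apply: NNPP => nPx; apply: K1P; exists x.
right => y K2y.
have : P (x * y) by rewrite K12.
by case/(Pprime _ _ (K1A x K1x) (K2A y K2y)).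
Qed.

Lemma properly_zipped_above_subfamily (K : T -> Prop) (I : Type) (p : T -> Prop)
    (q : I -> T -> Prop) (D : I -> Prop) :
  properly_zipped_above A K -> (forall x, K x -> A x) ->
  is_prime_ideal_in A p -> (forall i, is_prime_ideal_in A (q i)) ->
  (forall i, D i -> forall x, K x -> q i x) ->
  (forall x, A x -> (forall i, D i -> q i x) -> p x) ->
  exists i, forall x, q i x -> p x.
Proof.
move=> zippedK KA pprime qprime Kq meet_le_p.
have [j le_qj_p] := zippedK {i | D i} p (fun j => q (sval j)) pprime
  (fun j => qprime (sval j))
  (fun x Kx => meet_le_p x (KA x Kx) (fun i Di => Kq i Di x Kx))
  (fun j => Kq _ (svalP j))
  (fun x Ax qx => meet_le_p x Ax (fun i Di => qx (exist _ i Di))).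
by exists (sval j).
Qed.

Lemma properly_zipped_in_of_above (K1 K2 : T -> Prop) :
  (forall x, K1 x -> A x) -> (forall x, K2 x -> A x) ->
  (forall x y, K1 x -> K2 y -> x * y = 0) ->
  properly_zipped_above A K1 -> properly_zipped_above A K2 ->
  properly_zipped_in A.
Proof.
move=> K1A K2A K12 zipped1 zipped2 I p q pprime qprime meet_le_p.
pose D i := forall x, K1 x -> q i x.
have [le_p|le_p] :=
  prime_above_meet_split D pprime (fun i => (qprime i).1) meet_le_p.
  exact: (properly_zipped_above_subfamily (D := D) zipped1 K1A pprime qprime _ le_p).
apply: (properly_zipped_above_subfamily zipped2 K2A pprime qprime _ le_p) => i nDi.
by case: (prime_above_either_kernel K1A K2A K12 (qprime i)).
Qed.

End ZippedAboveTwoKernels.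

Section Amalgamation.

Variables (R S : comNzRingType) (f : {rmorphism R -> S}) (J : S -> Prop).
Hypothesis Jideal : is_ideal J.

Lemma amalgamation_subring : subring_in (amalgamation f J).
Proof.
have [_ [J0 [JD JM]]] := Jideal.
have JB j j' : J j -> J j' -> J (j - j').
  by move=> Jj Jj'; apply: JD => //; rewrite -mulN1r; apply: JM.
split.
- by exists 1, 0; rewrite rmorph1 addr0.
- move=> _ _ [r [j [Jj ->]]] [r' [j' [Jj' ->]]].
  exists (r - r'), (j - j'); split; first exact: JB.
  by congr pair; rewrite /= rmorphB opprD addrACA.
- move=> _ _ [r [j [Jj ->]]] [r' [j' [Jj' ->]]].
  exists (r * r'), (f r * j' + j * f r' + j * j'); split.
    by apply: (JD); [apply: (JD); [|rewrite mulrC]|]; apply: (JM).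
  by congr pair; rewrite /= rmorphM mulrDl !mulrDr !addrA.
Qed.

Lemma amalgamation_diag r : amalgamation f J (r, f r).
Proof. by exists r, 0; split; [exact: Jideal.2.1|rewrite addr0]. Qed.

End Amalgamation.

Lemma mul_pair_eq0 (R S : comNzRingType) (x y : R * S) :
  x.1 = 0 -> y.2 = 0 -> x * y = 0.
Proof. by case: x y => [a b] [c d] /= -> ->; congr pair; rewrite /= ?mul0r ?mulr0. Qed.

Theorem theorem4p7 (R S : comNzRingType) (f : {rmorphism R -> S})
  (J : S -> Prop) :
  (forall s : S, exists r : R, f r = s) ->
  is_ideal J ->
  (exists j, J j /\ j <> 0) ->
  ~ J 1 ->
  (properly_zipped_in (amalgamation f J) <-> properly_zipped R).
Proof.
move=> f_onto Jideal _ _.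
have subA := amalgamation_subring f Jideal.
have fst_onto (r : R) : exists2 x, amalgamation f J x & x.1 = r.
  by exists (r, f r); first exact: amalgamation_diag.
have snd_onto (s : S) : exists2 x, amalgamation f J x & x.2 = s.
  by have [r <-] := f_onto s; exists (r, f r); first exact: amalgamation_diag.
split => [|zippedR].
  by apply: (properly_zipped_in_image (g := fst)) => // r _; apply: fst_onto.
have zippedS : properly_zipped S.
  by apply: (properly_zipped_in_image (g := f) (@subring_inT R)) => // s _;
    have [r <-] := f_onto s; exists r.
apply: (properly_zipped_in_of_above (K1 := kernel_in (amalgamation f J) fst)
                                    (K2 := kernel_in (amalgamation f J) snd) subA).
- by move=> x [].
- by move=> x [].
- by move=> x y [_ x1] [_ y2]; apply: mul_pair_eq0.
- by apply: (properly_zipped_above_kernel (g := fst) subA _ _ zippedR) => // r _; exact: fst_onto.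
- by apply: (properly_zipped_above_kernel (g := snd) subA _ _ zippedS) => // s _; exact: snd_onto.
Qed.
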